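(* Let $\Phi=(\varphi_n)_{n\in\mathbb{N}}$ be a depth-bounded fuzzy simulation between fuzzy automata $\mathcal{A}$ and $\mathcal{A}'$. Then for every $n\in\mathbb{N}$ and every $(x,x')\in A\times A'$: $\varphi_n(x,x')\le S(\mathbf{L}^{\le n}(\mathcal{A}_x),\mathbf{L}^{\le n}(\mathcal{A}'_{x'}))$ and $\|\varphi_n\|_{\mathcal{A},\mathcal{A}'}\le S(\mathbf{L}^{\le n}(\mathcal{A}),\mathbf{L}^{\le n}(\mathcal{A}'))$.
   Context: $\mathcal{L}=\langle L,\le,\otimes,\Rightarrow,0,1\rangle$ is a complete residuated lattice: $\langle L,\le,0,1\rangle$ is a complete lattice with least element $0$ and greatest element $1$, $\langle L,\otimes,1\rangle$ is a commutative monoid, and $x\otimes y\le z$ iff $x\le (y\Rightarrow z)$. Fuzzy sets/relations are maps into $L$ ordered pointwise; $\varphi^{-1}(b,a)=\varphi(a,b)$; $(\varphi\circ\psi)(a,c)=\bigvee_b\varphi(a,b)\otimes\psi(b,c)$, $(f\circ\varphi)(b)=\bigvee_a f(a)\otimes\varphi(a,b)$, $(\varphi\circ g)(a)=\bigvee_b\varphi(a,b)\otimes g(b)$; for fuzzy sets $g,f$ on the same set, $S(g,f)=\bigwedge_a(g(a)\Rightarrow f(a))$. A fuzzy automaton over $\Sigma$ is $\mathcal{A}=\langle A,\delta^{\mathcal{A}},\sigma^{\mathcal{A}},\tau^{\mathcal{A}}\rangle$ with $A$ nonempty, $\delta^{\mathcal{A}}:A\times\Sigma\times A\to L$, $\sigma^{\mathcal{A}},\tau^{\mathcal{A}}:A\to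 L$; $\delta^{\mathcal{A}}_s(x,y)=\delta^{\mathcal{A}}(x,s,y)$; similarly $\mathcal{A}'$ with states $A'$. $\mathcal{A}_x$ is the automaton differing from $\mathcal{A}$ only in that its initial fuzzy set is $\{x:1\}$ (value $1$ at $x$, $0$ elsewhere). The recognized fuzzy language $\mathbf{L}(\mathcal{A}):\Sigma^*\to L$ is $\mathbf{L}(\mathcal{A})(s_1\cdots s_k)=\sigma^{\mathcal{A}}\circ\delta^{\mathcal{A}}_{s_1}\circ\cdots\circ\delta^{\mathcal{A}}_{s_k}\circ\tau^{\mathcal{A}}$; $\mathbf{L}^{\le n}(\mathcal{A})(w)=\mathbf{L}(\mathcal{A})(w)$ if $|w|\le n$ and $0$ otherwise. $\|\varphi\|_{\mathcal{A},\mathcal{A}'}=S(\sigma^{\mathcal{A}},\sigma^{\mathcal{A}'}\circ\varphi^{-1})$. A depth-bounded fuzzy simulation between $\mathcal{A}$ and $\mathcal{A}'$ is a sequence $(\varphi_n)_{n\in\mathbb{N}}$ of fuzzy relations $A\times A'\to L$ with $\varphi_n\le\varphi_{n-1}$ ($n\ge1$), $\varphi_0^{-1}\circ\tau^{\mathcal{A}}\le\tau^{\mathcal{A}'}$, and $\varphi_n^{-1}\circ\delta^{\mathcal{A}}_s\le\delta^{\mathcal{A}'}_s\circ\varphi_{n-1}^{-1}$ for all $s\in\Sigma$, $n\ge1$. *)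

From Stdlib Require Import List ClassicalEpsilon.
Import ListNotations.

Set Implicit Arguments.

Record CRL := {
  car :> Type;
  le : car -> car -> Prop;
  le_refl : forall x, le x x;
  le_trans : forall x y z, le x y -> le y z -> le x z;
  le_antisym : forall x y, le x y -> le y x -> x = y;
  sup : (car -> Prop) -> car;
  sup_ub : forall (P : car -> Prop) x, P x -> le x (sup P);
  sup_least : forall (P : car -> Prop) y, (forall x, P x -> le x y) -> le (sup P) y;
  inf : (car -> Prop) -> car;
  inf_lb : forall (P : car -> Prop) x, P x -> le (inf P) x;
  inf_greatest : forall (P : car -> Prop) y, (forall x, P x -> le y x) -> le y (inf P);
  zero : car;
  one : car;
  zero_least : forall x, le zero x;
  one_greatest : forall x, le x one;
  mul : car -> car -> car;
  mulA : forall x y z, mul x (mul y z) = mul (mul x y) z;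
  mulC : forall x y, mul x y = mul y x;
  mul1 : forall x, mul one x = x;
  res : car -> car -> car;
  adj : forall x y z, le (mul x y) z <-> le x (res y z)
}.

Section Fuzzy.
Variable L : CRL.

Definition fset (A : Type) := A -> L.
Definition frel (A B : Type) := A -> B -> L.

Definition fset_le (A : Type) (f g : fset A) : Prop := forall a, le L (f a) (g a).
Definition frel_le (A B : Type) (f g : frel A B) : Prop :=
  forall a b, le L (f a b) (g a b).

Definition finv (A B : Type) (phi : frel A B) : frel B A := fun b a => phi a b.

Definition comp_rr (A B C : Type) (phi : frel A B) (psi : frel B C) : frel A C :=
  fun a c => sup L (fun v => exists b, v = mul L (phi a b) (psi b c)).

Definition comp_sr (A B : Type) (f : fset A) (phi : frel A B) : fset B :=
  fun b => sup L (fun v => exists a, v = mul L (f a) (phi a b)).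

Definition comp_rs (A B : Type) (phi : frel A B) (g : fset B) : fset A :=
  fun a => sup L (fun v => exists b, v = mul L (phi a b) (g b)).

Definition subsethood (A : Type) (g f : fset A) : L :=
  inf L (fun v => exists a, v = res L (g a) (f a)).

Record FA (Sigma : Type) := {
  st : Type;
  st_ne : inhabited st;
  delta : st -> Sigma -> st -> L;
  sigma : fset st;
  tau : fset st
}.

Definition deltas (Sigma : Type) (A : FA Sigma) (s : Sigma) : frel (st A) (st A) :=
  fun x y => delta A x s y.

(** delta_{s1} o ... o delta_{sk} o tau  (a fuzzy set on the states) *)
Fixpoint run (Sigma : Type) (A : FA Sigma) (w : list Sigma) : fset (st A) :=
  match w with
  | [] => tau A
  | s :: w' => comp_rs (deltas A s) (run A w')
  end.

Definition lang (Sigma : Type) (A : FA Sigma) : fset (list Sigma) :=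
  fun w => sup L (fun v => exists a, v = mul L (sigma A a) (run A w a)).

Definition lang_le (Sigma : Type) (n : nat) (A : FA Sigma) : fset (list Sigma) :=
  fun w => if Nat.leb (length w) n then lang A w else zero L.

Definition singleton (A : Type) (x : A) : fset A :=
  fun y => if excluded_middle_informative (y = x) then one L else zero L.

Definition FA_at (Sigma : Type) (A : FA Sigma) (x : st A) : FA Sigma :=
  {| st := st A; st_ne := st_ne A; delta := delta A;
     sigma := singleton x; tau := tau A |}.

Definition fnorm (Sigma : Type) (A A' : FA Sigma) (phi : frel (st A) (st A')) : L :=
  subsethood (sigma A) (comp_sr (sigma A') (finv phi)).

Definition depth_bounded_sim (Sigma : Type) (A A' : FA Sigma)
    (phi : nat -> frel (st A) (st A')) : Prop :=
  (forall n, frel_le (phi (S n)) (phi n)) /\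
  fset_le (comp_rs (finv (phi 0)) (tau A)) (tau A') /\
  (forall (s : Sigma) (n : nat),
      frel_le (comp_rr (finv (phi (S n))) (deltas A s))
              (comp_rr (deltas A' s) (finv (phi n)))).

End Fuzzy.

From Stdlib Require Import Lia ClassicalEpsilon.

(** A depth-bounded simulation transports runs: if
    (phi_n) is such a simulation and |w| <= n, then
       phi_n(x,x') (x) (delta_w o tau)(x) <= (delta'_w o tau')(x'),
    by induction on w, each letter consuming one level of depth (the
    simulation condition on delta) and the empty word being handled by the
    condition on tau together with phi_n <= phi_0.
    Both claims of the theorem then follow from the adjunction, which turns
    "c <= S(F,G)" into "c (x) F(w) <= G(w) for every w":
    - the language of A_x at w is exactly the run of A on w read at x, so the
      first claim is the transport inequality itself;
    - for the norm, S(sigma, sigma' o phi^{-1}) (x) sigma(a) <= (sigma' o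
      phi^{-1})(a), and distributing (x) over the suprema defining L(A) and
      sigma' o phi^{-1} reduces the second claim to the transport inequality. *)

Section ResiduatedLattice.
Variable L : CRL.

Lemma mul_mono_r (x y z : L) : le L x y -> le L (mul L z x) (mul L z y).
Proof.
  intros Hxy. rewrite (mulC L z x), (mulC L z y). apply adj.
  eapply le_trans; [exact Hxy|]. apply adj, le_refl.
Qed.

Lemma mul_mono_l (x y z : L) : le L x y -> le L (mul L x z) (mul L y z).
Proof. intros Hxy. rewrite (mulC L x z), (mulC L y z). now apply mul_mono_r. Qed.

Lemma mul_sup_le (x z : L) (P : L -> Prop) :
  (forall u, P u -> le L (mul L x u) z) -> le L (mul L x (sup L P)) z.
Proof.
  intros H. rewrite mulC. apply adj, sup_least.
  intros u Hu. apply adj. rewrite mulC. auto.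
Qed.

Lemma mul_zero_r (x : L) : mul L x (zero L) = zero L.
Proof.
  apply le_antisym; [|apply zero_least].
  rewrite mulC. apply adj, zero_least.
Qed.

Lemma subsethood_greatest (A : Type) (g f : fset L A) (c : L) :
  (forall a, le L (mul L c (g a)) (f a)) -> le L c (subsethood g f).
Proof. intros H. apply inf_greatest. intros v [a ->]. now apply adj. Qed.

Lemma subsethood_mul_le (A : Type) (g f : fset L A) (a : A) :
  le L (mul L (subsethood g f) (g a)) (f a).
Proof. apply adj, inf_lb. now exists a. Qed.

End ResiduatedLattice.

Section Automata.
Variable L : CRL.
Variable Sigma : Type.

Lemma subsethood_lang_le (A B : FA L Sigma) (n : nat) (c : L) :
  (forall w, length w <= n -> le L (mul L c (lang A w)) (lang B w)) ->
  le L c (subsethood (lang_le n A) (lang_le n B)).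
Proof.
  intros H. apply subsethood_greatest. intros w. unfold lang_le.
  destruct (PeanoNat.Nat.leb_spec (length w) n) as [Hw|_].
  - now apply H.
  - rewrite mul_zero_r. apply zero_least.
Qed.

Lemma run_FA_at (A : FA L Sigma) (x : st A) (w : list Sigma) :
  run (FA_at A x) w = run A w.
Proof. induction w as [|s w IH]; simpl; [reflexivity|now rewrite IH]. Qed.

Lemma lang_FA_at (A : FA L Sigma) (x : st A) (w : list Sigma) :
  lang (FA_at A x) w = run A w x.
Proof.
  unfold lang. simpl. rewrite run_FA_at. apply le_antisym.
  - apply sup_least. intros v [a ->]. unfold singleton.
    destruct (excluded_middle_informative (a = x)) as [->|_].
    + rewrite mul1. apply le_refl.
    + rewrite mulC, mul_zero_r. apply zero_least.
  - apply sup_ub. exists x. unfold singleton.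
    destruct (excluded_middle_informative (x = x)) as [_|Hne]; [|contradiction].
    now rewrite mul1.
Qed.

Variables A A' : FA L Sigma.
Variable phi : nat -> frel L (st A) (st A').
Hypothesis Hsim : @depth_bounded_sim L Sigma A A' phi.

Lemma sim_le_depth0 (n : nat) (x : st A) (x' : st A') :
  le L (phi n x x') (phi 0 x x').
Proof.
  destruct Hsim as [Hdec _].
  induction n as [|n IH]; [apply le_refl|].
  eapply le_trans; [apply Hdec|exact IH].
Qed.

Lemma sim_tau (x : st A) (x' : st A') :
  le L (mul L (phi 0 x x') (tau A x)) (tau A' x').
Proof.
  destruct Hsim as [_ [Htau _]].
  eapply le_trans; [|apply Htau]. apply sup_ub. now exists x.
Qed.

Lemma sim_delta (s : Sigma) (n : nat) (x y : st A) (x' : st A') :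
  le L (mul L (phi (S n) x x') (deltas A s x y))
       (comp_rr (deltas A' s) (finv (phi n)) x' y).
Proof.
  destruct Hsim as [_ [_ Hdelta]].
  eapply le_trans; [|apply Hdelta]. apply sup_ub. now exists x.
Qed.

Lemma sim_run (w : list Sigma) :
  forall n x x', length w <= n ->
  le L (mul L (phi n x x') (run A w x)) (run A' w x').
Proof.
  induction w as [|s w IH]; intros n x x' Hlen; simpl.
  - eapply le_trans; [apply mul_mono_l, sim_le_depth0|]. apply sim_tau.
  - destruct n as [|m]; [simpl in Hlen; lia|].
    apply mul_sup_le. intros u [y ->]. rewrite mulA.
    eapply le_trans; [apply mul_mono_l, sim_delta|].
    rewrite mulC. apply mul_sup_le. intros v [y' ->].
    (* regroup as delta'_s(x',y') (x) (phi_m(y,y') (x) run A w y) *)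
    rewrite (mulC L _ (mul L _ _)), <- mulA.
    eapply le_trans; [apply mul_mono_r, IH; simpl in Hlen; lia|].
    apply sup_ub. now exists y'.
Qed.

End Automata.

Lemma fnorm_transfer (L : CRL) (Sigma : Type) (A A' : FA L Sigma)
    (psi : frel L (st A) (st A')) (w : list Sigma) :
  (forall x x', le L (mul L (psi x x') (run A w x)) (run A' w x')) ->
  le L (mul L (@fnorm L Sigma A A' psi) (lang A w)) (lang A' w).
Proof.
  intros Hrun. unfold fnorm, lang at 1.
  apply mul_sup_le. intros u [a ->]. rewrite mulA.
  eapply le_trans; [apply mul_mono_l, subsethood_mul_le|].
  unfold comp_sr. rewrite mulC. apply mul_sup_le. intros v [a' ->].
  unfold finv. rewrite (mulC L _ (mul L _ _)), <- mulA.
  eapply le_trans; [apply mul_mono_r, Hrun|].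
  apply sup_ub. now exists a'.
Qed.

Theorem mainTheorem6 (L : CRL) (Sigma : Type) (A A' : FA L Sigma)
    (phi : nat -> frel L (st A) (st A')) :
  @depth_bounded_sim L Sigma A A' phi ->
  forall n : nat,
    (forall (x : st A) (x' : st A'),
        le L (phi n x x')
           (subsethood (lang_le n (@FA_at L Sigma A x)) (lang_le n (@FA_at L Sigma A' x')))) /\
    le L (@fnorm L Sigma A A' (phi n)) (subsethood (lang_le n A) (lang_le n A')).
Proof.
  intros Hsim n. split.
  - intros x x'. apply subsethood_lang_le. intros w Hw.
    rewrite !lang_FA_at. now apply sim_run.
  - apply subsethood_lang_le. intros w Hw.
    apply fnorm_transfer. intros x x'. now apply sim_run.
Qed.
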